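(* For every $k\in\mathbb{R}\setminus\{0\}$ and every $x\ge L_k$, $$\operatorname{sign}\big[(H_k'(x))^2-H_k(x)H_k''(x)\big]=\operatorname{sign}(k).$$ Consequently, $q\mapsto \operatorname{sign}(k)\,H_k'(q)/H_k(q)=|H_k'(q)/H_k(q)|$ is positive and decreasing on $(R_k,\infty)$.
   Context: For real $k$, the Hermite function $H_k:\mathbb{R}\to\mathbb{R}$ is the (unique) solution of $H_k''(x)-xH_k'(x)+kH_k(x)=0$ with $H_k(x)=x^k+o(x^k)$ as $x\to+\infty$. $L_k$ is the leftmost real zero of $H_k$ if $k>0$ and $L_k=-\infty$ if $k\le 0$; $R_k$ is the rightmost real zero of $H_k$ if $k>0$ and $R_k=-\infty$ if $k\le 0$. *)

From Stdlib Require Import Reals Lra.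
Open Scope R_scope.

Definition is_hermite (k : R) (H H1 H2 : R -> R) : Prop :=
  (forall x, derivable_pt_lim H x (H1 x)) /\
  (forall x, derivable_pt_lim H1 x (H2 x)) /\
  (forall x, H2 x - x * H1 x + k * H x = 0) /\
  (forall eps, 0 < eps -> exists M, forall x, M < x -> 0 < x ->
      Rabs (H x - Rpower x k) <= eps * Rpower x k).

Definition is_leftmost_zero (H : R -> R) (L : R) : Prop :=
  H L = 0 /\ forall z, H z = 0 -> L <= z.

Definition is_rightmost_zero (H : R -> R) (Rz : R) : Prop :=
  H Rz = 0 /\ forall z, H z = 0 -> z <= Rz.

(* x >= L_k, where L_k = -infinity if k <= 0 *)
Definition ge_L (k : R) (H : R -> R) (x : R) : Prop :=
  k <= 0 \/ exists L, is_leftmost_zero H L /\ L <= x.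

(* x > R_k, where R_k = -infinity if k <= 0 *)
Definition gt_R (k : R) (H : R -> R) (x : R) : Prop :=
  k <= 0 \/ exists Rz, is_rightmost_zero H Rz /\ Rz < x.

Definition sgn (x : R) : R :=
  if Rlt_dec 0 x then 1 else if Rlt_dec x 0 then -1 else 0.

From Stdlib Require Import Reals Lra Psatz Classical.
From Coquelicot Require Import Coquelicot.
Open Scope R_scope.

(* With W = H'^2 - H H'' = H'^2 - x H H' + k H^2 ([laguerre]) and u = H'/H ([logderiv])
   one has W' = x W - H H' and u' = -W / H^2.  Since H(x) ~ x^k, log H grows slower than any
   linear function, so u comes arbitrarily close to 0 arbitrarily far to the right: u cannot
   move monotonically away from 0 on a half-line.  At a zero of W, W' = -u H^2; if u > 0
   there, W stays negative afterwards and u increases away from 0, which is absurd.  So W only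
   crosses 0 upwards and stays positive once it is nonnegative.  For k > 0, W = H'^2 > 0 at
   every zero of H, whence W > 0 right of L_k; for k < 0, a positive tail of W would make u
   decrease to 0 from above, but then W / H^2 = u^2 - x u + k < 0, so W < 0 everywhere and H
   has no zero.  The claims on u follow from u' = -W / H^2 and the same tail argument. *)

Lemma derive_neg_sign_change f x l :
  derivable_pt_lim f x l -> f x = 0 -> l < 0 ->
  exists d, 0 < d /\ forall h, 0 < h < d -> f (x + h) < 0 < f (x - h).
Proof.
intros hd hx hl.
destruct (hd (- l / 2)) as [d hdd]; [lra|].
exists d; split; [apply cond_pos|]. intros h hh.
assert (hr := hdd h ltac:(lra) ltac:(rewrite Rabs_right; lra)).
assert (hl' := hdd (- h) ltac:(lra) ltac:(rewrite Rabs_left; lra)).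
apply Rabs_def2 in hr. apply Rabs_def2 in hl'.
assert (er : f (x + h) = (f (x + h) - f x) / h * h) by (rewrite hx; field; lra).
assert (el : f (x - h) = (f (x + - h) - f x) / - h * - h) by (rewrite hx; unfold Rminus; field; lra).
split; nra.
Qed.

Lemma derive_pos_sign_change f x l :
  derivable_pt_lim f x l -> f x = 0 -> 0 < l ->
  exists d, 0 < d /\ forall h, 0 < h < d -> f (x - h) < 0 < f (x + h).
Proof.
intros hd hx hl.
destruct (derive_neg_sign_change (- f)%F x (- l)) as (d & hd0 & hs).
- now apply derivable_pt_lim_opp.
- unfold opp_fct; lra.
- lra.
- exists d; split; [easy|]. intros h hh. specialize (hs h hh). unfold opp_fct in hs. lra.
Qed.

Lemma continuity_pt_nonzero f x :
  continuity_pt f x -> f x <> 0 ->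
  exists d, 0 < d /\ forall y, Rabs (y - x) < d -> f y <> 0.
Proof.
intros hc hx.
assert (habs : 0 < Rabs (f x)) by now apply Rabs_pos_lt.
destruct (hc (Rabs (f x) / 2)) as (d & hd & hdd); [lra|].
exists d; split; [easy|]. intros y hy hy0.
destruct (Req_dec y x) as [->|hne]; [easy|].
specialize (hdd y (conj (conj I (not_eq_sym hne)) hy)). simpl in hdd. unfold R_dist in hdd.
rewrite hy0, Rminus_0_l, Rabs_Ropp in hdd. lra.
Qed.

Lemma continuous_nonvanishing_sign f a b :
  continuity f -> a <= b -> (forall s, a <= s <= b -> f s <> 0) -> 0 < f a * f b.
Proof.
intros hc hab hnz.
destruct (Rlt_le_dec 0 (f a * f b)) as [|hle]; [easy|exfalso].
destruct (IVT_cor f a b hc hab hle) as (z & hz & hz0). now apply (hnz z).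
Qed.

Lemma greatest_zero f a b :
  continuity f -> a <= b -> f a = 0 ->
  exists r, a <= r <= b /\ f r = 0 /\ forall s, r < s <= b -> f s <> 0.
Proof.
intros hc hab ha.
set (E := fun x => a <= x <= b /\ f x = 0).
destruct (completeness E) as (r & hub & hlub).
- exists b. now intros x [hx _].
- exists a. split; [lra|easy].
- assert (har : a <= r) by (apply hub; split; [lra|easy]).
  assert (hrb : r <= b) by (apply hlub; now intros x [hx _]).
  assert (hr0 : f r = 0).
  { destruct (Req_dec (f r) 0) as [|hne]; [easy|exfalso].
    destruct (continuity_pt_nonzero f r (hc r) hne) as (d & hd & hnz).
    enough (r <= r - d / 2) by lra.
    apply hlub. intros x [hx hx0].
    destruct (Rle_lt_dec x (r - d / 2)) as [|hlt]; [easy|exfalso].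
    assert (x <= r) by (apply hub; split; easy).
    apply (hnz x); [rewrite Rabs_left1; lra | easy]. }
  exists r. split; [lra|split; [easy|]].
  intros s hs hs0. assert (s <= r) by (apply hub; split; [lra|easy]). lra.
Qed.

Lemma least_zero f a b :
  continuity f -> a <= b -> f b = 0 ->
  exists t, a <= t <= b /\ f t = 0 /\ forall s, a <= s < t -> f s <> 0.
Proof.
intros hc hab hb.
destruct (greatest_zero (fun y => f (- y)) (- b) (- a)) as (r & hr & hr0 & hnz).
- intros x. apply (continuity_pt_comp Ropp f); [apply continuity_pt_opp, continuity_pt_id | apply hc].
- lra.
- now rewrite Ropp_involutive.
- exists (- r). split; [lra|split; [easy|]].
  intros s hs. rewrite <- (Ropp_involutive s). apply hnz. lra.
Qed.

Lemma ex_derive_of_pt_lim f x l : derivable_pt_lim f x l -> ex_derive (fun y => f y) x.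
Proof. intros hd. exists l. now apply is_derive_Reals. Qed.

Lemma Derive_of_pt_lim f x l : derivable_pt_lim f x l -> Derive (fun y => f y) x = l.
Proof. intros hd. apply is_derive_unique. now apply is_derive_Reals. Qed.

Lemma continuity_of_derive f f' :
  (forall x, derivable_pt_lim f x (f' x)) -> continuity f.
Proof. intros hd x. apply derivable_continuous_pt. exists (f' x). apply hd. Qed.

Lemma neg_after_downcrossing f f' a :
  (forall x, derivable_pt_lim f x (f' x)) -> f a = 0 -> f' a < 0 ->
  (forall t, a < t -> f t = 0 -> (forall s, a < s < t -> f s < 0) -> f' t < 0) ->
  forall y, a < y -> f y < 0.
Proof.
intros hd ha hla hcross y hy.
assert (hc := continuity_of_derive f f' hd).
destruct (derive_neg_sign_change f a (f' a) (hd a) ha hla) as (d & hd0 & hs).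
destruct (Rlt_le_dec y (a + d)) as [hyd|hyd].
{ replace y with (a + (y - a)) by ring. apply hs; lra. }
destruct (Rlt_le_dec (f y) 0) as [|hfy]; [easy|exfalso].
set (b := a + d / 2).
assert (hb : f b < 0) by (apply hs; lra).
destruct (IVT_cor f b y hc ltac:(unfold b; lra) ltac:(nra)) as (t1 & ht1 & ht10).
destruct (least_zero f b t1 hc ltac:(lra) ht10) as (t & ht & ht0 & hnz).
assert (hbt : b < t) by (destruct (Req_dec b t) as [<-|]; lra).
assert (hneg : forall s, a < s < t -> f s < 0).
{ intros s hs'. destruct (Rle_lt_dec s b) as [hsb|hsb].
  - replace s with (a + (s - a)) by ring. apply hs; unfold b in *; lra.
  - assert (0 < f b * f s) by (apply continuous_nonvanishing_sign; [easy|lra|intros; apply hnz; lra]).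
    nra. }
destruct (derive_neg_sign_change f t (f' t) (hd t) ht0 (hcross t ltac:(unfold b in *; lra) ht0 hneg))
  as (d' & hd'0 & hs').
set (h := Rmin d' (t - b) / 2).
assert (0 < Rmin d' (t - b)) by (apply Rmin_pos; lra).
assert (Rmin d' (t - b) <= d') by apply Rmin_l.
assert (Rmin d' (t - b) <= t - b) by apply Rmin_r.
assert (0 < f (t - h)) by (apply hs'; unfold h; lra).
assert (f (t - h) < 0) by (apply hneg; unfold h, b in *; lra).
lra.
Qed.

Lemma pos_after_upcrossing f f' x0 :
  (forall x, derivable_pt_lim f x (f' x)) -> (forall t, f t = 0 -> 0 < f' t) ->
  0 <= f x0 -> forall y, x0 < y -> 0 < f y.
Proof.
intros hd hup hx0.
assert (hc := continuity_of_derive f f' hd).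
assert (hzero : forall t y, f t = 0 -> t < y -> 0 < f y).
{ intros t y ht hty.
  enough ((- f)%F y < 0) by (unfold opp_fct in *; lra).
  apply (neg_after_downcrossing (- f)%F (- f')%F t); [| |unfold opp_fct..|easy].
  - intros x. now apply derivable_pt_lim_opp.
  - unfold opp_fct. rewrite ht. ring.
  - specialize (hup t ht). lra.
  - intros s _ hs _. assert (f s = 0) by lra. specialize (hup s H). lra. }
intros y hy.
destruct (Rlt_le_dec 0 (f y)) as [|hle]; [easy|exfalso].
assert (exists t, x0 <= t < y /\ f t = 0) as (t & ht & ht0).
{ destruct (Req_dec (f y) 0) as [hy0|hy0].
  - destruct (derive_pos_sign_change f y (f' y) (hd y) hy0 (hup y hy0)) as (d & hd0 & hs).
    set (s := y - Rmin d (y - x0) / 2).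
    assert (0 < Rmin d (y - x0)) by (apply Rmin_pos; lra).
    assert (Rmin d (y - x0) <= d) by apply Rmin_l.
    assert (Rmin d (y - x0) <= y - x0) by apply Rmin_r.
    assert (f s < 0) by (apply hs; lra).
    destruct (IVT_cor f x0 s hc ltac:(unfold s; lra) ltac:(nra)) as (t & ht & ht0).
    exists t. split; [unfold s in *; lra|easy].
  - destruct (IVT_cor f x0 y hc ltac:(lra) ltac:(nra)) as (t & ht & ht0).
    exists t. split; [|easy]. split; [lra|]. destruct (Req_dec t y) as [->|]; [easy|lra]. }
specialize (hzero t y ht0 (proj2 ht)). lra.
Qed.

Lemma gronwall_vanishing f f' C a b :
  (forall t, derivable_pt_lim f t (f' t)) -> a <= b ->
  (forall t, a <= t <= b -> 0 <= f t) -> (forall t, a <= t <= b -> f' t <= C * f t) ->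
  f a = 0 -> f b = 0.
Proof.
intros hd hab hpos hbound ha.
destruct (Req_dec a b) as [<-|hne]; [easy|].
destruct (MVT_cor2 (fun t => f t * exp (- C * t)) (fun t => (f' t - C * f t) * exp (- C * t)) a b)
  as (c & hc & hac); [lra| |].
- intros c _. apply is_derive_Reals. auto_derive.
  + exact (ex_derive_of_pt_lim f c _ (hd c)).
  + rewrite (Derive_of_pt_lim f c _ (hd c)). ring.
- rewrite ha, Rmult_0_l in hc.
  assert (0 < exp (- C * b)) by apply exp_pos.
  assert (0 < exp (- C * c)) by apply exp_pos.
  assert (f' c - C * f c <= 0) by (specialize (hbound c); lra).
  assert (0 <= f b) by (apply hpos; lra).
  assert (hprod : (f' c - C * f c) * exp (- C * c) <= 0) by nra.
  assert (f b * exp (- C * b) <= 0) by nra.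
  nra.
Qed.


Section Hermite.

Variables (k : R) (H H1 H2 : R -> R).
Hypothesis hH : is_hermite k H H1 H2.

Definition laguerre x := H1 x ^ 2 - x * H x * H1 x + k * H x ^ 2.
Definition logderiv x := H1 x / H x.

Lemma laguerre_eq x : H1 x ^ 2 - H x * H2 x = laguerre x.
Proof.
destruct hH as (_ & _ & hode & _). unfold laguerre.
replace (H2 x) with (x * H1 x - k * H x) by (specialize (hode x); lra). ring.
Qed.

Lemma derive_H x : derivable_pt_lim H x (H1 x).
Proof. apply hH. Qed.

Lemma derive_H1 x : derivable_pt_lim H1 x (x * H1 x - k * H x).
Proof.
destruct hH as (_ & hd & hode & _).
replace (x * H1 x - k * H x) with (H2 x) by (specialize (hode x); lra). apply hd.
Qed.

Local Ltac hermite_derive :=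
  apply is_derive_Reals; auto_derive;
  [ repeat split;
    first [ exact (ex_derive_of_pt_lim _ _ _ (derive_H _))
          | exact (ex_derive_of_pt_lim _ _ _ (derive_H1 _)) | assumption | lra ]
  | rewrite ?(Derive_of_pt_lim _ _ _ (derive_H _)), ?(Derive_of_pt_lim _ _ _ (derive_H1 _)) ].

Lemma continuity_H : continuity H.
Proof. exact (continuity_of_derive H H1 derive_H). Qed.

Lemma derive_laguerre x : derivable_pt_lim laguerre x (x * laguerre x - H x * H1 x).
Proof. unfold laguerre. hermite_derive. ring. Qed.

Lemma derive_logderiv x : H x <> 0 -> derivable_pt_lim logderiv x (- laguerre x / H x ^ 2).
Proof. intros hx. unfold logderiv, laguerre. hermite_derive. field. easy. Qed.

Lemma derive_ln_H x : 0 < H x -> derivable_pt_lim (fun t => ln (H t)) x (logderiv x).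
Proof. intros hx. unfold logderiv. hermite_derive. field. lra. Qed.

Lemma H_mul_H1 x : H x <> 0 -> H x * H1 x = logderiv x * H x ^ 2.
Proof. intros hx. unfold logderiv. field. easy. Qed.

Lemma laguerre_logderiv x : H x <> 0 ->
  laguerre x = H x ^ 2 * (logderiv x ^ 2 - x * logderiv x + k).
Proof. intros hx. unfold laguerre, logderiv. field. easy. Qed.

Lemma hermite_log_asymptotics : exists M, forall x, M < x ->
  0 < H x /\ Rabs (ln (H x) - k * ln x) <= ln 2.
Proof.
destruct hH as (_ & _ & _ & hasym).
destruct (hasym (1 / 2)) as (M & hM); [lra|].
exists (Rmax M 0). intros x hx.
assert (M < x) by (eapply Rle_lt_trans; [apply Rmax_l|exact hx]).
assert (0 < x) by (eapply Rle_lt_trans; [apply Rmax_r|exact hx]).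
specialize (hM x ltac:(easy) ltac:(easy)). apply Rabs_le_between in hM.
assert (hp : 0 < Rpower x k) by apply exp_pos.
assert (hln : ln (Rpower x k) = k * ln x) by apply ln_exp.
assert (0 < H x) by lra.
assert (hlow : ln (Rpower x k / 2) <= ln (H x)) by (apply ln_le; lra).
assert (hup : ln (H x) <= ln (2 * Rpower x k)) by (apply ln_le; lra).
rewrite ln_div in hlow by lra. rewrite ln_mult in hup by lra.
split; [easy|]. apply Rabs_le_between. lra.
Qed.

Lemma logderiv_not_bounded_away a c : 0 < c -> exists t, a <= t /\ Rabs (logderiv t) < c.
Proof.
intros hc. destruct hermite_log_asymptotics as (M & hM).
assert (hln2 : 0 < ln 2) by (rewrite <- ln_1; apply ln_increasing; lra).
set (B := Rabs k * ln 2 + 2 * ln 2).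
set (x := Rmax (Rmax a M) 0 + B / c + 1).
assert (Rmax a M <= Rmax (Rmax a M) 0) by apply Rmax_l.
assert (0 <= Rmax (Rmax a M) 0) by apply Rmax_r.
assert (a <= Rmax a M) by apply Rmax_l.
assert (M <= Rmax a M) by apply Rmax_r.
assert (0 <= B) by (assert (0 <= Rabs k) by apply Rabs_pos; unfold B; nra).
assert (0 <= B / c) by (apply Rdiv_le_0_compat; lra).
assert (hBx : B < c * x).
{ assert (c * (B / c) = B) by (field; lra). unfold x. nra. }
destruct (MVT_cor2 (fun t => ln (H t)) logderiv x (2 * x)) as (t & ht & hxt); [unfold x; lra| |].
{ intros t ht. apply derive_ln_H, hM. unfold x in *; lra. }
exists t. split; [unfold x in *; lra|].
destruct (hM x ltac:(unfold x; lra)) as (hx0 & hx).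
destruct (hM (2 * x) ltac:(unfold x; lra)) as (h2x0 & h2x).
rewrite ln_mult in h2x by (unfold x in *; lra).
apply Rabs_le_between in hx. apply Rabs_le_between in h2x.
assert (hk2 : Rabs (k * ln 2) <= Rabs k * ln 2) by (rewrite Rabs_mult, (Rabs_right (ln 2)); lra).
apply Rabs_le_between in hk2.
assert (hux : Rabs (logderiv t) * x <= B).
{ rewrite <- (Rabs_right x) by (unfold x in *; lra). rewrite <- Rabs_mult.
  apply Rabs_le_between. replace (2 * x - x) with x in ht by ring. unfold B. lra. }
nra.
Qed.

Lemma hermite_no_double_zero z : H z = 0 -> H1 z <> 0.
Proof.
intros h0 h1. destruct hermite_log_asymptotics as (M & hM).
set (x := Rmax M z + 1).
assert (M <= Rmax M z) by apply Rmax_l.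
assert (z <= Rmax M z) by apply Rmax_r.
assert (hx : 0 < H x) by (apply hM; unfold x; lra).
enough (H x ^ 2 + H1 x ^ 2 = 0) by nra.
apply (gronwall_vanishing (fun t => H t ^ 2 + H1 t ^ 2)
         (fun t => 2 * (1 - k) * (H t * H1 t) + 2 * t * H1 t ^ 2) (Rabs (1 - k) + 2 * Rabs x) z x).
- intros t. hermite_derive. ring.
- unfold x; lra.
- intros t _. nra.
- intros t ht.
  assert (2 * (1 - k) * (H t * H1 t) <= Rabs (1 - k) * (H t ^ 2 + H1 t ^ 2)).
  { assert (0 <= (H t - H1 t) ^ 2) by apply pow2_ge_0.
    assert (0 <= (H t + H1 t) ^ 2) by apply pow2_ge_0.
    destruct (Rcase_abs (1 - k)); [rewrite Rabs_left|rewrite Rabs_right]; nra. }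
  assert (t <= Rabs x) by (eapply Rle_trans; [apply ht|apply Rle_abs]).
  assert (0 <= Rabs x) by apply Rabs_pos.
  nra.
- rewrite h0, h1. ring.
Qed.

Lemma laguerre_at_zero z : H z = 0 -> laguerre z = H1 z ^ 2.
Proof. intros h0. unfold laguerre. rewrite h0. ring. Qed.

Lemma H_nonzero_of_laguerre_nonpos x : laguerre x <= 0 -> H x <> 0.
Proof.
intros hW h0. apply (hermite_no_double_zero x h0).
rewrite laguerre_at_zero in hW by easy. nra.
Qed.

Lemma logderiv_increasing x y : x < y -> (forall t, x <= t <= y -> H t <> 0) ->
  (forall t, x < t < y -> laguerre t < 0) -> logderiv x < logderiv y.
Proof.
intros hxy hnz hW.
destruct (MVT_cor2 logderiv (fun t => - laguerre t / H t ^ 2) x y hxy) as (c & hc & hxc).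
{ intros c hc. apply derive_logderiv, hnz, hc. }
assert (0 < H c ^ 2) by (apply pow2_gt_0, hnz; lra).
assert (0 < - laguerre c / H c ^ 2) by (apply Rdiv_lt_0_compat; [specialize (hW c hxc)|]; lra).
nra.
Qed.

Lemma logderiv_decreasing x y : x < y -> (forall t, x <= t <= y -> H t <> 0) ->
  (forall t, x < t < y -> 0 < laguerre t) -> logderiv y < logderiv x.
Proof.
intros hxy hnz hW.
destruct (MVT_cor2 logderiv (fun t => - laguerre t / H t ^ 2) x y hxy) as (c & hc & hxc).
{ intros c hc. apply derive_logderiv, hnz, hc. }
assert (0 < H c ^ 2) by (apply pow2_gt_0, hnz; lra).
assert (0 < laguerre c / H c ^ 2) by (apply Rdiv_lt_0_compat; [apply hW, hxc|lra]).
assert (- laguerre c / H c ^ 2 = - (laguerre c / H c ^ 2)) by (unfold Rdiv; ring).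
nra.
Qed.

Lemma logderiv_nonpos_of_increasing a : (forall t, a <= t -> H t <> 0) ->
  (forall t, a < t -> laguerre t < 0) -> forall t, a <= t -> logderiv t <= 0.
Proof.
intros hnz hW t hat.
destruct (Rle_lt_dec (logderiv t) 0) as [|hpos]; [easy|exfalso].
destruct (logderiv_not_bounded_away t (logderiv t) hpos) as (s & hts & hs).
assert (logderiv t <= logderiv s).
{ destruct (Req_dec t s) as [<-|hne]; [lra|].
  apply Rlt_le, logderiv_increasing; [lra|intros; apply hnz; lra|intros; apply hW; lra]. }
assert (logderiv s <= Rabs (logderiv s)) by apply Rle_abs. lra.
Qed.

Lemma logderiv_nonneg_of_decreasing a : (forall t, a <= t -> H t <> 0) ->
  (forall t, a < t -> 0 < laguerre t) -> forall t, a <= t -> 0 <= logderiv t.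
Proof.
intros hnz hW t hat.
destruct (Rle_lt_dec 0 (logderiv t)) as [|hneg]; [easy|exfalso].
destruct (logderiv_not_bounded_away t (- logderiv t)) as (s & hts & hs); [lra|].
assert (logderiv s <= logderiv t).
{ destruct (Req_dec t s) as [<-|hne]; [lra|].
  apply Rlt_le, logderiv_decreasing; [lra|intros; apply hnz; lra|intros; apply hW; lra]. }
assert (- logderiv s <= Rabs (logderiv s)) by (rewrite <- Rabs_Ropp; apply Rle_abs). lra.
Qed.

Lemma laguerre_zero_sign x : k <> 0 -> laguerre x = 0 -> H x * H1 x < 0.
Proof.
intros hk hW.
assert (hHx : H x <> 0) by (apply H_nonzero_of_laguerre_nonpos; lra).
assert (hH1x : H1 x <> 0).
{ intros h1. unfold laguerre in hW. rewrite h1 in hW.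
  assert (0 < H x ^ 2) by now apply pow2_gt_0.
  assert (hkH : k * H x ^ 2 = 0) by lra. destruct (Rmult_integral _ _ hkH); lra. }
destruct (Rlt_le_dec (H x * H1 x) 0) as [|hle]; [easy|exfalso].
assert (hpos : 0 < H x * H1 x).
{ destruct (Rle_lt_or_eq_dec _ _ hle) as [|heq]; [easy|].
  destruct (Rmult_integral _ _ (eq_sym heq)); contradiction. }
assert (hneg : forall y, x < y -> laguerre y < 0).
{ apply (neg_after_downcrossing laguerre (fun t => t * laguerre t - H t * H1 t) x derive_laguerre hW).
  - rewrite hW. lra.
  - intros t hxt ht0 hneg.
    assert (hnz : forall s, x <= s <= t -> H s <> 0).
    { intros s hs. apply H_nonzero_of_laguerre_nonpos.
      destruct (Req_dec s x) as [->|]; [lra|]. destruct (Req_dec s t) as [->|]; [lra|].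
      apply Rlt_le, hneg. lra. }
    assert (hu : logderiv x < logderiv t) by (apply logderiv_increasing; auto).
    rewrite ht0, H_mul_H1 by (apply hnz; lra).
    rewrite H_mul_H1 in hpos by easy.
    assert (0 < H x ^ 2) by now apply pow2_gt_0.
    assert (0 < H t ^ 2) by (apply pow2_gt_0, hnz; lra).
    assert (0 < logderiv x) by nra.
    nra. }
assert (hu : logderiv x <= 0).
{ apply (logderiv_nonpos_of_increasing x); [|intros; apply hneg; lra|lra].
  intros t hxt. destruct (Req_dec t x) as [->|]; [easy|].
  apply H_nonzero_of_laguerre_nonpos, Rlt_le, hneg. lra. }
rewrite H_mul_H1 in hpos by easy.
assert (0 < H x ^ 2) by now apply pow2_gt_0.
nra.
Qed.

Lemma laguerre_pos_after x0 : k <> 0 -> 0 <= laguerre x0 -> forall y, x0 < y -> 0 < laguerre y.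
Proof.
intros hk. apply (pos_after_upcrossing laguerre _ x0 derive_laguerre).
intros t ht. rewrite ht. assert (H t * H1 t < 0) by now apply laguerre_zero_sign. lra.
Qed.

Lemma H_zero_after_laguerre_zero a : k <> 0 -> laguerre a = 0 -> exists z, a <= z /\ H z = 0.
Proof.
intros hk hW. apply NNPP. intros hno.
assert (hnz : forall t, a <= t -> H t <> 0) by (intros t ht h0; apply hno; eauto).
assert (hu : 0 <= logderiv a).
{ apply (logderiv_nonneg_of_decreasing a hnz); [|lra].
  apply laguerre_pos_after; [easy|lra]. }
assert (hprod := laguerre_zero_sign a hk hW).
rewrite H_mul_H1 in hprod by (apply hnz; lra).
assert (0 < H a ^ 2) by (apply pow2_gt_0, hnz; lra).
nra.
Qed.

Lemma hermite_zeros_bounded_above : exists M, forall z, H z = 0 -> z <= M.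
Proof.
destruct hermite_log_asymptotics as (M & hM). exists M. intros z hz.
destruct (Rle_lt_dec z M) as [|hlt]; [easy|]. destruct (hM z hlt). lra.
Qed.

(* With y = exp (-x^2/4) H, which solves Weber's equation y'' = (x^2/4 - k - 1/2) y,
   this function is y y'; its derivative y'^2 + (x^2/4 - k - 1/2) y^2 is positive far left. *)
Lemma derive_weber_energy x :
  derivable_pt_lim (fun t => exp (- t ^ 2 / 2) * (H t * H1 t - t * H t ^ 2 / 2)) x
    (exp (- x ^ 2 / 2) * ((H1 x - x * H x / 2) ^ 2 + (x ^ 2 / 4 - k - 1 / 2) * H x ^ 2)).
Proof. hermite_derive. replace (- x ^ 2 / 2) with (- (x * (x * 1)) * / 2) by field. field. Qed.

Lemma hermite_zeros_bounded_below : exists B, forall z, H z = 0 -> B <= z.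
Proof.
set (T := - (2 * Rabs k + 2)).
assert (hsep : forall z1 z2, z1 < z2 -> z2 < T -> H z1 = 0 -> H z2 = 0 -> False).
{ intros z1 z2 h12 h2 hz1 hz2.
  destruct (MVT_cor2 _ _ z1 z2 h12 (fun c _ => derive_weber_energy c)) as (c & hc & hc12).
  cbv beta in hc. rewrite hz1, hz2 in hc.
  assert (hq : 0 < c ^ 2 / 4 - k - 1 / 2).
  { assert (k <= Rabs k) by apply Rle_abs. assert (0 <= Rabs k) by apply Rabs_pos. unfold T in *. nra. }
  assert (0 < exp (- c ^ 2 / 2)) by apply exp_pos.
  set (S := (H1 c - c * H c / 2) ^ 2 + (c ^ 2 / 4 - k - 1 / 2) * H c ^ 2) in hc.
  assert (hprod : exp (- c ^ 2 / 2) * S * (z2 - z1) = 0) by (rewrite <- hc; field).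
  assert (hS : S = 0).
  { destruct (Rmult_integral _ _ hprod) as [h|h]; [|lra].
    destruct (Rmult_integral _ _ h); lra. }
  unfold S in hS.
  assert (0 <= (H1 c - c * H c / 2) ^ 2) by apply pow2_ge_0.
  assert (0 <= H c ^ 2) by apply pow2_ge_0.
  assert (hHc : H c = 0) by (apply Rsqr_0_uniq; unfold Rsqr; nra).
  apply (hermite_no_double_zero c hHc).
  rewrite hHc in hS. apply Rsqr_0_uniq. unfold Rsqr. nra. }
destruct (classic (exists z, H z = 0 /\ z < T)) as [[z [hz hzT]]|hno].
- exists z. intros z' hz'. destruct (Rle_lt_dec z z') as [|hlt]; [easy|exfalso].
  now apply (hsep z' z).
- exists T. intros z hz. destruct (Rle_lt_dec T z) as [|hlt]; [easy|exfalso]. eauto.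
Qed.

Lemma H_pos_of_nonvanishing a : (forall t, a <= t -> H t <> 0) -> forall t, a <= t -> 0 < H t.
Proof.
intros hnz t hat. destruct hermite_log_asymptotics as (M & hM).
set (y := Rmax M t + 1).
assert (M <= Rmax M t) by apply Rmax_l.
assert (t <= Rmax M t) by apply Rmax_r.
destruct (hM y ltac:(unfold y; lra)) as (hy & _).
assert (0 < H t * H y)
  by (apply (continuous_nonvanishing_sign H t y continuity_H); [unfold y; lra|intros; apply hnz; lra]).
nra.
Qed.

(* H / H1 solves v' = 1 + (k H^2 - x H H1) / H1^2 > 1 on x < 0, so it would turn negative. *)
Lemma hermite_not_everywhere_increasing :
  0 < k -> (forall x, 0 < H x) -> (forall x, 0 < H1 x) -> False.
Proof.
intros hk hpos hH1.
set (v t := H t / H1 t).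
assert (hv : forall x, derivable_pt_lim v x (laguerre x / H1 x ^ 2)).
{ intros x. assert (H1 x <> 0) by (specialize (hH1 x); lra). unfold v, laguerre. hermite_derive. field. easy. }
assert (hslope : forall x, x < 0 -> 1 < laguerre x / H1 x ^ 2).
{ intros x hx. assert (0 < H1 x ^ 2) by (apply pow2_gt_0; specialize (hH1 x); lra).
  apply (Rmult_lt_reg_r (H1 x ^ 2)); [easy|]. unfold Rdiv. rewrite Rmult_assoc, Rinv_l by lra.
  unfold laguerre. specialize (hpos x). specialize (hH1 x).
  assert (0 < - x * H x * H1 x) by (apply Rmult_lt_0_compat; [apply Rmult_lt_0_compat|]; lra).
  nra. }
set (x0 := - v 0 - 1).
assert (hv0 : 0 < v 0) by (apply Rdiv_lt_0_compat; auto).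
destruct (MVT_cor2 v (fun t => laguerre t / H1 t ^ 2) x0 0) as (c & hc & hc0);
  [unfold x0; lra|intros; apply hv|].
assert (hvx0 : 0 < v x0) by (apply Rdiv_lt_0_compat; auto).
assert (1 * (0 - x0) < laguerre c / H1 c ^ 2 * (0 - x0))
  by (apply Rmult_lt_compat_r; [unfold x0; lra|apply hslope; lra]).
unfold x0 in *. lra.
Qed.

Lemma hermite_has_zero : 0 < k -> exists z, H z = 0.
Proof.
intros hk. apply NNPP. intros hno.
assert (hnz : forall x, H x <> 0) by (intros x hx; apply hno; eauto).
assert (hpos : forall x, 0 < H x) by (intros x; apply (H_pos_of_nonvanishing x); auto; lra).
assert (hWnz : forall x, laguerre x <> 0).
{ intros x hW. destruct (H_zero_after_laguerre_zero x) as (z & _ & hz); [lra|easy|]. now apply (hnz z). }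
assert (hW0 : 0 < laguerre 0).
{ unfold laguerre. assert (0 < H 0 ^ 2) by now apply pow2_gt_0. nra. }
assert (hW : forall x, 0 < laguerre x).
{ intros x. destruct (Rle_lt_dec x 0).
  - assert (0 < laguerre x * laguerre 0)
      by (apply continuous_nonvanishing_sign; [exact (continuity_of_derive _ _ derive_laguerre)|lra|auto]).
    nra.
  - apply (laguerre_pos_after 0); lra. }
assert (hu : forall x, 0 <= logderiv x).
{ intros x. apply (logderiv_nonneg_of_decreasing x); auto; lra. }
apply (hermite_not_everywhere_increasing hk hpos).
intros x.
assert (logderiv (x + 1) < logderiv x) by (apply logderiv_decreasing; auto; lra).
specialize (hu (x + 1)). specialize (hpos x).
assert (0 < logderiv x) by lra. unfold logderiv in *.
assert (H1 x = H1 x / H x * H x) by (field; lra). nra.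
Qed.

Lemma laguerre_neg_of_neg_index x : k < 0 -> laguerre x < 0.
Proof.
intros hk. apply Rnot_le_lt. intros hge.
destruct hermite_log_asymptotics as (M & hM).
set (a := Rmax (Rmax x M) 0 + 1).
assert (Rmax x M <= Rmax (Rmax x M) 0) by apply Rmax_l.
assert (0 <= Rmax (Rmax x M) 0) by apply Rmax_r.
assert (x <= Rmax x M) by apply Rmax_l.
assert (M <= Rmax x M) by apply Rmax_r.
assert (hnz : forall t, a <= t -> H t <> 0).
{ intros t ht. destruct (hM t ltac:(unfold a in *; lra)). lra. }
assert (hW : forall t, a <= t -> 0 < laguerre t).
{ intros t ht. apply (laguerre_pos_after x); [lra|lra|unfold a in *; lra]. }
assert (hu : forall t, a <= t -> 0 <= logderiv t)
  by (apply logderiv_nonneg_of_decreasing; [easy|intros; apply hW; lra]).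
set (c := Rmin 1 (- k)).
assert (c <= 1) by apply Rmin_l.
assert (c <= - k) by apply Rmin_r.
destruct (logderiv_not_bounded_away a c) as (t & hat & hut); [apply Rmin_pos; lra|].
specialize (hu t hat). rewrite Rabs_right in hut by lra.
assert (0 < H t ^ 2) by (apply pow2_gt_0, hnz, hat).
assert (logderiv t ^ 2 - t * logderiv t + k < 0) by (unfold a in *; nra).
specialize (hW t hat). rewrite laguerre_logderiv in hW by (apply hnz, hat).
nra.
Qed.

Lemma logderiv_neg_of_neg_index q : k < 0 -> logderiv q < 0.
Proof.
intros hk.
assert (hnz : forall t, H t <> 0)
  by (intros t; apply H_nonzero_of_laguerre_nonpos, Rlt_le, laguerre_neg_of_neg_index, hk).
assert (logderiv q < logderiv (q + 1))
  by (apply logderiv_increasing; [lra|auto|intros; now apply laguerre_neg_of_neg_index]).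
assert (logderiv (q + 1) <= 0).
{ apply (logderiv_nonpos_of_increasing q); [auto|intros; now apply laguerre_neg_of_neg_index|lra]. }
lra.
Qed.

Lemma laguerre_pos_right_of_zero z x : 0 < k -> H z = 0 -> z <= x -> 0 < laguerre x.
Proof.
intros hk hz hzx.
assert (hWz : 0 < laguerre z)
  by (rewrite laguerre_at_zero by easy; now apply pow2_gt_0, hermite_no_double_zero).
destruct (Req_dec z x) as [<-|]; [easy|].
apply (laguerre_pos_after z); lra.
Qed.

Lemma hermite_leftmost_zero : 0 < k -> exists L, is_leftmost_zero H L.
Proof.
intros hk. destruct (hermite_has_zero hk) as (z & hz).
destruct hermite_zeros_bounded_below as (B & hB).
destruct (least_zero H B z continuity_H (hB z hz) hz) as (L & hL & hL0 & hfirst).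
exists L. split; [easy|]. intros y hy.
destruct (Rle_lt_dec L y) as [|hlt]; [easy|exfalso].
apply (hfirst y); [split; [now apply hB|easy]|easy].
Qed.

Lemma hermite_rightmost_zero : 0 < k -> exists Rz, is_rightmost_zero H Rz.
Proof.
intros hk. destruct (hermite_has_zero hk) as (z & hz).
destruct hermite_zeros_bounded_above as (M & hM).
destruct (greatest_zero H z M continuity_H (hM z hz) hz) as (Rz & hR & hR0 & hlast).
exists Rz. split; [easy|]. intros y hy.
destruct (Rle_lt_dec y Rz) as [|hlt]; [easy|exfalso].
apply (hlast y); [split; [easy|now apply hM]|easy].
Qed.

Section RightOfLastZero.

Variable Rz : R.
Hypotheses (hk : 0 < k) (hRz : is_rightmost_zero H Rz).

Lemma H_nonzero_right_of_last_zero t : Rz < t -> H t <> 0.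
Proof. intros ht h0. destruct hRz as [_ hlast]. specialize (hlast t h0). lra. Qed.

Lemma logderiv_decreasing_right_of_last_zero p q : Rz < p -> p < q -> logderiv q < logderiv p.
Proof.
intros hp hpq. apply logderiv_decreasing; [easy|..].
- intros t ht. apply H_nonzero_right_of_last_zero. lra.
- intros t ht. apply (laguerre_pos_right_of_zero Rz); [easy|apply hRz|lra].
Qed.

Lemma logderiv_pos_right_of_last_zero q : Rz < q -> 0 < logderiv q.
Proof.
intros hq.
assert (0 <= logderiv (q + 1)).
{ apply (logderiv_nonneg_of_decreasing q); [|intros|lra].
  - intros t ht. apply H_nonzero_right_of_last_zero. lra.
  - apply (laguerre_pos_right_of_zero Rz); [easy|apply hRz|lra]. }
assert (logderiv (q + 1) < logderiv q) by (apply logderiv_decreasing_right_of_last_zero; lra).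
lra.
Qed.

End RightOfLastZero.

End Hermite.

Lemma sgn_pos x : 0 < x -> sgn x = 1.
Proof. intros h. unfold sgn. destruct (Rlt_dec 0 x); [easy|lra]. Qed.

Lemma sgn_neg x : x < 0 -> sgn x = -1.
Proof. intros h. unfold sgn. destruct (Rlt_dec 0 x); [lra|]. destruct (Rlt_dec x 0); [easy|lra]. Qed.

Theorem corollary3 (k : R) (H H1 H2 : R -> R) :
  k <> 0 ->
  is_hermite k H H1 H2 ->
  (0 < k -> (exists L, is_leftmost_zero H L) /\ (exists Rz, is_rightmost_zero H Rz)) /\
  (forall x, ge_L k H x ->
     sgn (H1 x ^ 2 - H x * H2 x) = sgn k) /\
  (forall q, gt_R k H q ->
     0 < sgn k * (H1 q / H q) /\ sgn k * (H1 q / H q) = Rabs (H1 q / H q)) /\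
  (forall p q, gt_R k H p -> gt_R k H q -> p < q ->
     sgn k * (H1 q / H q) < sgn k * (H1 p / H p)).
Proof.
intros hk0 hH.
pose proof (laguerre_eq k H H1 H2 hH) as hlag.
destruct (Rtotal_order k 0) as [hk|[hk|hk]]; [|contradiction|]; rewrite ?(sgn_neg k hk), ?(sgn_pos k hk).
- assert (hW := fun x => laguerre_neg_of_neg_index k H H1 H2 hH x hk).
  split; [lra|]. split; [|split].
  + intros x _. rewrite hlag. now apply sgn_neg.
  + intros q _. assert (hu := logderiv_neg_of_neg_index k H H1 H2 hH q hk). unfold logderiv in hu.
    rewrite Rabs_left; lra.
  + intros p q _ _ hpq.
    assert (hnz : forall t, H t <> 0)
      by (intros t; apply (H_nonzero_of_laguerre_nonpos k H H1 H2 hH), Rlt_le, hW).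
    assert (hu : logderiv H H1 p < logderiv H H1 q)
      by (apply (logderiv_increasing k H H1 H2 hH); auto).
    unfold logderiv in hu. lra.
- split; [split; [apply (hermite_leftmost_zero k H H1 H2 hH)|apply (hermite_rightmost_zero k H H1 H2 hH)]; easy|].
  split; [|split].
  + intros x [|(L & [hL0 _] & hLx)]; [lra|].
    rewrite hlag. now apply sgn_pos, (laguerre_pos_right_of_zero k H H1 H2 hH L).
  + intros q [|(Rz & hRz & hq)]; [lra|].
    assert (hu := logderiv_pos_right_of_last_zero k H H1 H2 hH Rz hk hRz q hq). unfold logderiv in hu.
    rewrite Rabs_right; lra.
  + intros p q [|(Rz & hRz & hp)] _ hpq; [lra|].
    assert (hu := logderiv_decreasing_right_of_last_zero k H H1 H2 hH Rz hk hRz p q hp hpq).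
    unfold logderiv in hu. lra.
Qed.
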